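(* Let $m,n$ be positive integers with $m\geq n$. Then \begin{multline*} \sum_{k=0}^{n} \binom{m+k}{k} \binom{m}{k} \binom{n+k}{k} \binom{n}{k} \Bigl[ 1+k \bigl(H_{m+k}^{(1)} +H_{m-k}^{(1)} + H_{n+k}^{(1)} + H_{n-k}^{(1)} -4H_k^{(1)}\bigr) \Bigr]\\ +\sum_{k=n+1}^{m} (-1)^{k-n} \binom{m+k}{k} \binom{m}{k} \binom{n+k}{k} \Big/ \binom{k-1}{n} =(-1)^{m+n}. \end{multline*}
   Context: For non-negative integers $i$ and $n$, the generalized harmonic sum is $H^{(i)}_{n}:=\sum_{j=1}^{n} j^{-i}$ for $n\ge 1$, and $H^{(i)}_{0}:=0$. An empty sum (e.g. the second sum when $m=n$) equals $0$. *)

From mathcomp Require Import all_boot all_order all_algebra.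
Set Implicit Arguments. Unset Strict Implicit. Unset Printing Implicit Defensive.
Import Order.TTheory GRing.Theory Num.Theory.
Local Open Scope ring_scope.

Definition harm (i n : nat) : rat := \sum_(1 <= j < n.+1) ((j%:R) ^+ i)^-1.

From mathcomp Require Import all_boot all_order all_algebra.
From mathcomp Require Import ring zify.
Set Implicit Arguments. Unset Strict Implicit. Unset Printing Implicit Defensive.
Import Order.TTheory GRing.Theory Num.Theory.
Local Open Scope ring_scope.

(* The left-hand side is (-1)^(m-n) times the sum of the residues of
     x (x+1)_m (x+1)_n / (prod_(j<=n) (x-j)^2 * prod_(n<j<=m) (x-j))
   at its double poles 0..n (the first sum; differentiating produces the harmonic
   numbers) and at its simple poles n+1..m (the second sum). The numerator is monic of
   degree one less than the denominator, so these residues add up to 1. Over any field,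
   this residue sum identity follows by induction on the number of poles, splitting off
   one pole factor at a time with a Bezout decomposition. *)

Section ResidueSum.
Variable R : fieldType.

Definition pole_factor (a : R) (double : bool) : {poly R} := ('X - a%:P) ^+ double.+1.

(* When [C.[a] != 0], this is the residue at [a] of [P / (pole_factor a double * C)]. *)
Definition residue (P C : {poly R}) (a : R) (double : bool) : R :=
  if double then (P^`().[a] * C.[a] - P.[a] * C^`().[a]) / C.[a] ^+ 2
  else P.[a] / C.[a].

Lemma residueD (P1 P2 C : {poly R}) a b :
  residue (P1 + P2) C a b = residue P1 C a b + residue P2 C a b.
Proof. by rewrite /residue; case: b; rewrite ?derivD !hornerD -mulrDl; congr (_ * _); ring. Qed.

Lemma residue_pole_factorM (S C : {poly R}) a b : residue (pole_factor a b * S) C a b = 0.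
Proof.
rewrite /residue /pole_factor; case: b => /=; last by rewrite !hornerE subrr !mul0r.
by rewrite derivM deriv_exp !hornerE /= subrr !expr0n /= !(mulr0, mul0r, addr0, subrr).
Qed.

Lemma residue_cancel (F P C : {poly R}) a b : F.[a] != 0 -> C.[a] != 0 ->
  residue (F * P) (F * C) a b = residue P C a b.
Proof.
by move=> F0 C0; rewrite /residue; case: b; rewrite ?derivM ?hornerD !hornerM; field; rewrite F0 C0.
Qed.

Lemma residue_poly1 (P : {poly R}) a (b : bool) : (size P <= b.+1)%N ->
  residue P 1 a b = P`_b.
Proof.
rewrite /residue; case: b => /= sP; last by rewrite {1}(size1_polyC sP) !hornerE divr1.
have sP' : (size P^`() <= 1)%N.
  have [->|P0] := eqVneq P 0; first by rewrite deriv0 size_poly0.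
  by rewrite -ltnS (leq_trans (lt_size_deriv P0)).
by rewrite (size1_polyC sP') derivC !hornerE coef_deriv mulr1n subr0 expr1n divr1.
Qed.

Lemma coef_Mmonic_last (p q : {poly R}) k g : q \is monic -> size q = g.+1 ->
  (size p <= k)%N -> (p * q)`_(k + g).-1 = p`_k.-1.
Proof.
move=> mq sq sp; have [->|p0] := eqVneq p 0; first by rewrite mul0r !coef0.
move: sp; rewrite leq_eqVlt => /orP[/eqP <-|lt].
  have -> : (size p + g = size (p * q)%R)%N by rewrite size_Mmonic // sq addnS.
  exact: lead_coef_Mmonic.
rewrite !nth_default //; last by rewrite size_Mmonic // sq; lia.
by case: k lt.
Qed.

Lemma coprimep_decomp (G F P : {poly R}) g f : coprimep G F -> G \is monic ->
  size G = g.+1 -> (size F <= f.+1)%N -> (size P <= g + f)%N ->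
  exists A B, [/\ P = A * G + B * F, (size A <= f)%N & (size B <= g)%N].
Proof.
move=> cop mG sG sF sP; have G0 := monic_neq0 mG.
have [[u v] /= uv] := Bezout_eq1_coprimepP _ _ cop.
set B := (P * v) %% G; set A := P * u + (P * v) %/ G * F.
have PAB : P = A * G + B * F.
  have -> : B = P * v - (P * v) %/ G * G.
    by rewrite /B {2}(divp_eq (P * v) G) addrAC subrr add0r.
  by rewrite -[LHS]mulr1 -uv /A; ring.
have sB : (size B <= g)%N by rewrite -ltnS -sG ltn_modpN0.
exists A, B; split=> //.
have [->|A0] := eqVneq A 0; first by rewrite size_poly0.
have : (size (A * G)%R <= g + f)%N.
  rewrite (_ : A * G = P - B * F); last by rewrite PAB addrK.
  rewrite (leq_trans (size_polyD _ _)) // size_polyN geq_max sP /=.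
  rewrite (leq_trans (size_polyMleq B F)) // -subn1; move: (size B) (size F) sB sF; lia.
by rewrite size_Mmonic // sG addnS /=; lia.
Qed.

Lemma residue_Xmul_double (P C : {poly R}) a : P.[a] != 0 -> C.[a] != 0 ->
  residue ('X * P) C a true =
    P.[a] / C.[a] * (1 + a * (P^`().[a] / P.[a] - C^`().[a] / C.[a])).
Proof.
move=> P0 C0; rewrite /residue derivM derivX mul1r hornerD !hornerM hornerX.
by field; rewrite P0 C0.
Qed.

Lemma pole_factor_logder (a x : R) b : x != a ->
  (pole_factor a b)^`().[x] / (pole_factor a b).[x] =
    (x - a)^-1 + (if b then (x - a)^-1 else 0).
Proof.
rewrite -subr_eq0 => xa; rewrite /pole_factor deriv_exp derivXsubC mul1r hornerMn !horner_exp.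
by rewrite hornerXsubC -mulr_natr; case: b => /=; field.
Qed.

Lemma horner_deriv_prod (I : eqType) (r : seq I) (P : pred I) (f : I -> {poly R}) x :
  {in r, forall i, P i -> (f i).[x] != 0} ->
  (\prod_(i <- r | P i) f i)^`().[x] =
    (\prod_(i <- r | P i) f i).[x] * \sum_(i <- r | P i) (f i)^`().[x] / (f i).[x].
Proof.
elim: r => [|i r IH] f0; first by rewrite !big_nil derivC hornerC mulr0.
have f0r : {in r, forall j, P j -> (f j).[x] != 0}.
  by move=> j jr; apply: f0; rewrite inE jr orbT.
rewrite !big_cons; case: ifP => Pi; last exact: IH.
have fi0 := f0 i (mem_head _ _) Pi.
by rewrite derivM hornerD !hornerM (IH f0r); field.
Qed.

Variables (a : nat -> R) (e : nat -> bool).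
Hypothesis a_inj : injective a.

Definition poles N := \prod_(0 <= j < N) pole_factor (a j) (e j).
Definition pole_count N := (\sum_(0 <= j < N) (e j).+1)%N.
Definition cofactor N i := \prod_(0 <= j < N | j != i) pole_factor (a j) (e j).

Lemma pole_factor_monic j : pole_factor (a j) (e j) \is monic.
Proof. by rewrite /pole_factor monic_exp // monicXsubC. Qed.

Lemma poles_monic N : poles N \is monic.
Proof. by rewrite /poles monic_prod // => j _; apply: pole_factor_monic. Qed.

Lemma size_poles N : size (poles N) = (pole_count N).+1.
Proof.
elim: N => [|N IH]; first by rewrite /poles /pole_count !big_geq // size_poly1.
rewrite /poles /pole_count !big_nat_recr //= -/(poles N) -/(pole_count N).
rewrite size_Mmonic ?pole_factor_monic ?monic_neq0 ?poles_monic // IH.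
by rewrite /pole_factor size_exp_XsubC addSn addnS.
Qed.

Lemma pole_factor_horner_neq0 i j : i != j -> (pole_factor (a j) (e j)).[a i] != 0.
Proof.
move=> ij; rewrite /pole_factor horner_exp hornerXsubC expf_neq0 // subr_eq0.
by apply: contra ij => /eqP/a_inj ->.
Qed.

Lemma horner_poles_neq0 N i : (N <= i)%N -> (poles N).[a i] != 0.
Proof.
move=> Ni; rewrite /poles horner_prod prodf_seq_neq0; apply/allP => j.
rewrite mem_index_iota => /andP[_ jN].
by apply: pole_factor_horner_neq0; rewrite gtn_eqF ?(leq_trans jN).
Qed.

Lemma horner_cofactor_neq0 N i : (cofactor N i).[a i] != 0.
Proof.
rewrite /cofactor horner_prod prodf_seq_neq0; apply/allP => j _.
by apply/implyP => ji; apply: pole_factor_horner_neq0; rewrite eq_sym.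
Qed.

Lemma cofactorSn N : cofactor N.+1 N = poles N.
Proof.
rewrite /cofactor big_mkcond big_nat_recr //= eqxx mulr1.
by apply: eq_big_nat => j /andP[_ jN]; rewrite ltn_eqF.
Qed.

Lemma cofactorS N i : (i < N)%N ->
  cofactor N.+1 i = pole_factor (a N) (e N) * cofactor N i.
Proof.
move=> iN; rewrite /cofactor big_mkcond big_nat_recr //= gtn_eqF //.
by rewrite mulrC -big_mkcond.
Qed.

Lemma poles_cofactor N i : (i < N)%N ->
  poles N = pole_factor (a i) (e i) * cofactor N i.
Proof. by move=> iN; rewrite /poles (bigD1_seq i) ?mem_index_iota ?iota_uniq. Qed.

(* Minus the residue at infinity of [P / poles N] is the coefficient of [x ^ (pole_count N - 1)]
   in [P], which is thus the sum of the finite residues. *)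
Theorem coef_pole_count_residues N (P : {poly R}) : (size P <= pole_count N)%N ->
  P`_(pole_count N).-1 = \sum_(0 <= i < N) residue P (cofactor N i) (a i) (e i).
Proof.
elim: N P => [|N IH] P sP.
  move: sP; rewrite /pole_count big_geq // leqn0 size_poly_eq0 big_geq // => /eqP ->.
  by rewrite coef0.
set G := poles N; set F := pole_factor (a N) (e N).
have pole_countS : pole_count N.+1 = (pole_count N + (e N).+1)%N.
  by rewrite /pole_count big_nat_recr.
have sF : size F = (e N).+2 by rewrite /F /pole_factor size_exp_XsubC.
have cop : coprimep G F.
  by rewrite /F /pole_factor coprimep_pexpr // coprimep_XsubC /root horner_poles_neq0.
rewrite pole_countS in sP *.
have [A [B [-> sA sB]]] := coprimep_decomp cop (poles_monic N) (size_poles N) (eq_leq sF) sP.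
rewrite coefD big_nat_recr //= cofactorSn residueD.
have -> : (A * G)`_(pole_count N + (e N).+1).-1 = A`_(e N).
  by rewrite addnC (coef_Mmonic_last (poles_monic N) (size_poles N) sA).
rewrite (coef_Mmonic_last (pole_factor_monic N) sF sB) (IH B sB).
have -> : residue (A * G) G (a N) (e N) = A`_(e N).
  rewrite -[G in residue _ G]mulr1 mulrC residue_cancel ?horner_poles_neq0 ?hornerC ?oner_neq0 //.
  exact: residue_poly1.
rewrite [B * F]mulrC residue_pole_factorM addr0 addrC; congr (_ + _).
apply: eq_big_nat => i /andP[_ iN].
rewrite cofactorS // residueD /G (poles_cofactor iN) mulrCA residue_pole_factorM add0r.
by rewrite residue_cancel ?pole_factor_horner_neq0 ?horner_cofactor_neq0 ?ltn_eqF.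
Qed.

End ResidueSum.

Lemma big_nat_split_neq (T : Type) (idx : T) (op : Monoid.law idx) (F : nat -> T) k N :
  (k < N)%N -> \big[op/idx]_(0 <= j < N | j != k) F j =
    op (\big[op/idx]_(0 <= j < k) F j) (\big[op/idx]_(k.+1 <= j < N) F j).
Proof.
move=> kN; rewrite big_mkcond (big_cat_nat (leq0n k) (ltnW kN)) /= (big_ltn kN) eqxx.
rewrite Monoid.mul1m.
congr (op _ _); apply: eq_big_nat => j /andP[kj jk].
  by rewrite ltn_eqF.
by rewrite gtn_eqF.
Qed.

Lemma big_nat_if_le (T : Type) (idx : T) (op : Monoid.law idx) (P : pred nat)
    (F : nat -> T) n N :
  (n <= N)%N ->
  \big[op/idx]_(0 <= j < N.+1 | P j) (if (j <= n)%N then F j else idx)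
  = \big[op/idx]_(0 <= j < n.+1 | P j) F j.
Proof.
move=> nN; rewrite (big_cat_nat (leq0n n.+1)) //= [X in op _ X]big1_seq ?Monoid.mulm1.
  by apply: congr_big_nat => // j /andP[_ /andP[_ jn]]; rewrite -ltnS jn.
by move=> j /andP[_]; rewrite mem_index_iota => /andP[nj _]; rewrite leqNgt nj.
Qed.

Lemma sign_sub_sub {R : pzRingType} a b c : (a <= b <= c)%N ->
  (-1) ^+ (c - a) * (-1) ^+ (b - a) = (-1) ^+ (c - b) :> R.
Proof.
move=> abc; rewrite (_ : c - a = (c - b) + (b - a))%N; last by lia.
by rewrite exprD -mulrA -expr2 sqrr_sign mulr1.
Qed.

Section NatProducts.
Variable R : comNzRingType.

Lemma prod_natr_sub_lt k M : (M <= k)%N ->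
  \prod_(0 <= j < M) (k%:R - j%:R : R) = (k ^_ M)%N%:R.
Proof.
move=> Mk; rewrite ffact_prod natr_prod big_mkord; apply: eq_bigr => j _.
by rewrite natrB // ltnW // (leq_trans (ltn_ord j)).
Qed.

Lemma prod_natr_sub_gt k M : (k <= M)%N ->
  \prod_(k.+1 <= j < M.+1) (k%:R - j%:R : R) = (-1) ^+ (M - k) * (M - k)`!%:R.
Proof.
move=> /subnKC <-; rewrite addKn; elim: (M - k)%N => [|L IH].
  by rewrite addn0 big_geq // mulr1.
rewrite addnS big_nat_recr /= ?ltnS ?leq_addr // IH factS natrM exprS.
by rewrite -addnS natrD -natr1; ring.
Qed.

Lemma prod_natr_sub_neq k M : (k <= M)%N ->
  \prod_(0 <= j < M.+1 | j != k) (k%:R - j%:R : R) = (-1) ^+ (M - k) * (k`! * (M - k)`!)%:R.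
Proof.
move=> kM; rewrite big_nat_split_neq // prod_natr_sub_lt // ffactnn prod_natr_sub_gt //.
by rewrite natrM mulrCA.
Qed.

End NatProducts.

Lemma natr_fact_neq0 (R : numDomainType) k : (k`!%:R : R) != 0.
Proof. by rewrite pnatr_eq0 -lt0n fact_gt0. Qed.

Lemma natr_bin (R : numFieldType) k M : (k <= M)%N ->
  'C(M, k)%:R = M`!%:R / (k`!%:R * (M - k)`!%:R) :> R.
Proof.
by move=> kM; rewrite -(bin_fact kM) !natrM mulfK // mulf_neq0 ?natr_fact_neq0.
Qed.

Lemma natr_ffact (R : numFieldType) k M : (M <= k)%N ->
  (k ^_ M)%N%:R = k`!%:R / (k - M)`!%:R :> R.
Proof. by move=> Mk; rewrite -(ffact_fact Mk) natrM mulfK ?natr_fact_neq0. Qed.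

Lemma harmS n : harm 1 n.+1 = harm 1 n + n.+1%:R^-1.
Proof. by rewrite /harm big_nat_recr //= expr1. Qed.

Lemma sum_inv_natr_add k L :
  \sum_(1 <= i < L.+1) (k%:R + i%:R : rat)^-1 = harm 1 (k + L) - harm 1 k.
Proof.
elim: L => [|L IH]; first by rewrite big_geq // addn0 subrr.
by rewrite big_nat_recr //= IH addnS harmS -addnS natrD; ring.
Qed.

Lemma sum_inv_natr_sub_lt k : \sum_(0 <= j < k) (k%:R - j%:R : rat)^-1 = harm 1 k.
Proof.
elim: k => [|k IH]; first by rewrite big_geq // /harm big_geq.
rewrite big_ltn // big_add1 /= subr0 harmS -IH addrC; congr (_ + _).
by apply: eq_big_nat => j _; rewrite -!natr1; congr (_^-1); ring.
Qed.

Lemma sum_inv_natr_sub_gt k M : (k <= M)%N ->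
  \sum_(k.+1 <= j < M.+1) (k%:R - j%:R : rat)^-1 = - harm 1 (M - k).
Proof.
move=> /subnKC <-; rewrite addKn; elim: (M - k)%N => [|L IH].
  by rewrite addn0 big_geq // /harm big_geq // oppr0.
rewrite addnS big_nat_recr /= ?ltnS ?leq_addr // IH harmS opprD.
by congr (_ + _); rewrite -invrN -addnS natrD; congr (_^-1); ring.
Qed.

Lemma sum_inv_natr_sub_neq k M : (k <= M)%N ->
  \sum_(0 <= j < M.+1 | j != k) (k%:R - j%:R : rat)^-1 = harm 1 k - harm 1 (M - k).
Proof.
by move=> kM; rewrite big_nat_split_neq // sum_inv_natr_sub_lt sum_inv_natr_sub_gt.
Qed.

Definition rising L : {poly rat} := \prod_(1 <= i < L.+1) ('X + i%:R%:P).

Lemma rising_monic L : rising L \is monic.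
Proof. by rewrite /rising monic_prod // => i _; apply: monicXaddC. Qed.

Lemma size_rising L : size (rising L) = L.+1.
Proof.
elim: L => [|L IH]; first by rewrite /rising big_geq // size_poly1.
rewrite /rising big_nat_recr //= -/(rising L).
by rewrite size_Mmonic ?monicXaddC ?monic_neq0 ?rising_monic // IH size_XaddC addn2.
Qed.

Lemma horner_rising k L : (rising L).[k%:R] = (k + L)`!%:R / k`!%:R.
Proof.
elim: L => [|L IH]; first by rewrite /rising big_geq // hornerC addn0 divff ?natr_fact_neq0.
rewrite /rising big_nat_recr //= -/(rising L) hornerM IH hornerD hornerX hornerC.
by rewrite addnS factS natrM -addnS natrD; field; rewrite natr_fact_neq0.
Qed.

Lemma horner_rising_neq0 k L : (rising L).[k%:R] != 0.
Proof. by rewrite horner_rising mulf_neq0 ?invr_neq0 ?natr_fact_neq0. Qed.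

Lemma rising_logder k L :
  (rising L)^`().[k%:R] = (rising L).[k%:R] * (harm 1 (k + L) - harm 1 k).
Proof.
rewrite /rising horner_deriv_prod => [|i]; last first.
  rewrite mem_index_iota => /andP[i0 _] _.
  by rewrite hornerD hornerX hornerC -natrD pnatr_eq0 addn_eq0 negb_and orbC -lt0n i0.
rewrite -(sum_inv_natr_add k L); congr (_ * _); apply: eq_bigr => i _.
by rewrite derivD derivX derivC addr0 hornerC div1r hornerD hornerX hornerC.
Qed.

Section Identity.
Variables m n : nat.
Hypothesis nm : (n <= m)%N.

Definition numer : {poly rat} := 'X * (rising m * rising n).
Let node j : rat := j%:R.
Let is_double j := (j <= n)%N.
Let cof k := cofactor node is_double m.+1 k.

Lemma node_inj : injective node.
Proof. by move=> i j /eqP; rewrite eqr_nat => /eqP. Qed.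

Lemma pole_count_nodes : pole_count is_double m.+1 = (m + n).+2.
Proof.
rewrite /pole_count (big_cat_nat (leq0n n.+1)) ?ltnS //=.
rewrite (eq_big_nat _ _ (F2 := fun => 2%N)) => [|j /andP[_ jn]]; last first.
  by rewrite /is_double -ltnS jn.
rewrite [X in (_ + X)%N](eq_big_nat _ _ (F2 := fun => 1%N)) => [|j /andP[nj _]]; last first.
  by rewrite /is_double leqNgt nj.
by rewrite !sum_nat_const_nat; lia.
Qed.

Lemma numer_monic : numer \is monic.
Proof. by rewrite /numer !monicMl ?monicX ?rising_monic. Qed.

Lemma size_numer : size numer = (m + n).+2.
Proof.
rewrite /numer mulrC size_mulX ?monic_neq0 ?monicMl ?rising_monic //.
by rewrite size_Mmonic ?monic_neq0 ?rising_monic // !size_rising addnS.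
Qed.

Lemma residue_sum_nodes : \sum_(0 <= k < m.+1) residue numer (cof k) k%:R (k <= n)%N = 1.
Proof.
rewrite -(coef_pole_count_residues (e := is_double) node_inj) pole_count_nodes ?size_numer //.
by have /eqP := numer_monic; rewrite /lead_coef size_numer.
Qed.

Lemma horner_cof k : (cof k).[k%:R] =
  \prod_(0 <= j < m.+1 | j != k) (k%:R - j%:R) * \prod_(0 <= j < n.+1 | j != k) (k%:R - j%:R).
Proof.
rewrite /cof /cofactor horner_prod.
under eq_bigr do rewrite /pole_factor horner_exp hornerXsubC exprS.
rewrite big_split /= -(big_nat_if_le _ _ _ nm); congr (_ * _).
by apply: eq_bigr => j _; rewrite /is_double; case: (j <= n)%N.
Qed.

Lemma cof_logder k : (k <= n)%N -> (cof k)^`().[k%:R] =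
  (cof k).[k%:R] * ((harm 1 k - harm 1 (m - k)) + (harm 1 k - harm 1 (n - k))).
Proof.
move=> kn; rewrite /cof /cofactor horner_deriv_prod => [|j _ jk]; last first.
  by apply: pole_factor_horner_neq0; [apply: node_inj | rewrite eq_sym].
congr (_ * _); under eq_bigr => j jk do rewrite pole_factor_logder ?eqr_nat 1?eq_sym //.
rewrite big_split /= -(sum_inv_natr_sub_neq kn) -sum_inv_natr_sub_neq ?(leq_trans kn) //.
by congr (_ + _); apply: big_nat_if_le.
Qed.

Lemma horner_cof_double k : (k <= n)%N ->
  (cof k).[k%:R] = (-1) ^+ (m - n) * (k`! * (m - k)`! * (k`! * (n - k)`!))%:R.
Proof.
move=> kn; rewrite horner_cof !prod_natr_sub_neq ?(leq_trans kn) //.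
by rewrite -(sign_sub_sub (_ : k <= n <= m)%N) ?kn // natrM; ring.
Qed.

Lemma horner_cof_simple k : (n < k <= m)%N ->
  (cof k).[k%:R] = (-1) ^+ (m - k) * (k`! * (m - k)`!)%:R * (k ^_ n.+1)%N%:R.
Proof.
case/andP=> nk km; rewrite horner_cof prod_natr_sub_neq // -prod_natr_sub_lt //.
by congr (_ * _); apply: congr_big_nat => // j /andP[_ jn]; rewrite ltn_eqF // (leq_trans jn).
Qed.

Lemma residue_node_double k : (k <= n)%N ->
  residue numer (cof k) k%:R (k <= n)%N =
  (-1) ^+ (m - n) * (('C(m + k, k) * 'C(m, k) * 'C(n + k, k) * 'C(n, k))%:R
     * (1 + k%:R * (harm 1 (m + k) + harm 1 (m - k) + harm 1 (n + k)
                    + harm 1 (n - k) - 4%:R * harm 1 k))).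
Proof.
move=> kn; have km := leq_trans kn nm.
have P0 : (rising m * rising n).[k%:R] != 0 by rewrite hornerM mulf_neq0 ?horner_rising_neq0.
have C0 : (cof k).[k%:R] != 0 := horner_cofactor_neq0 is_double node_inj m.+1 k.
rewrite kn residue_Xmul_double // cof_logder // [_ * (harm _ _ - _ + _)]mulrC mulfK //.
rewrite derivM hornerD !hornerM !rising_logder horner_cof_double // invfM invr_sign.
rewrite !horner_rising !natrM !natr_bin ?leq_addl // !addnK (addnC k m) (addnC k n).
by field; rewrite !natr_fact_neq0.
Qed.

Lemma residue_node_simple k : (n < k <= m)%N ->
  residue numer (cof k) k%:R (k <= n)%N =
  (-1) ^+ (m - n) * ((-1) ^+ (k - n) * ('C(m + k, k) * 'C(m, k) * 'C(n + k, k))%:R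
     / ('C(k.-1, n))%:R).
Proof.
move=> /andP[nk km]; rewrite leqNgt nk /= /residue /numer hornerM hornerX.
rewrite horner_cof_simple ?nk // !invfM invr_sign.
rewrite -(sign_sub_sub (_ : n <= k <= m)%N) ?(ltnW nk) //.
have nk1 : (n <= k.-1)%N by rewrite -ltnS prednK // (leq_ltn_trans _ nk).
have kfact : k`! = (k * k.-1`!)%N by case: (k) nk.
rewrite natr_ffact // !hornerM !horner_rising !natrM !natr_bin ?leq_addl // !addnK.
rewrite (addnC k m) (addnC k n) -predn_sub -subnS kfact natrM.
by field; rewrite !natr_fact_neq0 pnatr_eq0 -lt0n (leq_ltn_trans _ nk).
Qed.
End Identity.

Theorem theorem1p2 (m n : nat) (hn : (0 < n)%N) (hnm : (n <= m)%N) :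
  \sum_(0 <= k < n.+1)
     ('C(m + k, k) * 'C(m, k) * 'C(n + k, k) * 'C(n, k))%:R
     * (1 + k%:R * (harm 1 (m + k) + harm 1 (m - k) + harm 1 (n + k)
                    + harm 1 (n - k) - 4%:R * harm 1 k))
  + \sum_(n.+1 <= k < m.+1)
     (-1) ^+ (k - n) * ('C(m + k, k) * 'C(m, k) * 'C(n + k, k))%:R
     / ('C(k.-1, n))%:R
  = (-1) ^+ (m + n) :> rat.
Proof.
have sign_mn : (-1) ^+ (m + n) = (-1) ^+ (m - n) :> rat.
  by rewrite (_ : m + n = (m - n) + n * 2)%N ?exprD ?exprM ?sqrr_sign ?mulr1 //; lia.
have unsign x : x = (-1) ^+ (m - n) * ((-1) ^+ (m - n) * x) :> rat.
  by rewrite mulrA -expr2 sqrr_sign mul1r.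
have nm1 : (n.+1 <= m.+1)%N by [].
rewrite sign_mn -[RHS]mulr1 -[X in _ = _ * X](residue_sum_nodes hnm).
rewrite (big_cat_nat (leq0n n.+1) nm1) /=.
rewrite mulrDr !big_distrr; congr (_ + _); apply: eq_big_nat => k /andP[k1 k2].
  by rewrite residue_node_double -?unsign.
by rewrite residue_node_simple ?k1 -?unsign.
Qed.
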